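(* Let $t_1, t_2 \in \mathsf{Topo}$, let $f$ be an embedding of $t_1$ inside $t_2$, and let $pkt \in \mathsf{Pkt}$, $pt \in \mathsf{Path}(t_1)$ and $q \in \mathsf{PIFOTree}(t_1)$. Then $\widehat f(\mathsf{push}(q, pkt, pt)) = \mathsf{push}(\widehat f(q), pkt, \widetilde f(pt))$.
   Context: Fix a set $\mathsf{Pkt}$ of packets and a totally ordered set $\mathsf{Rk}$ of ranks (smaller is more favorable). PIFOs: for a set $S$, a PIFO over $S$ is a finite sequence of pairs $(s,r)\in S\times\mathsf{Rk}$ in insertion order; $\mathsf{PIFO}(S)$ is the set of these. $\mathsf{push}_{\mathsf{PIFO}}(p,s,r)$ appends $(s,r)$ to $p$. Topologies: $\mathsf{Topo}$ is the smallest set with $*\in\mathsf{Topo}$ and $\mathsf{Node}(\vec t)\in\mathsf{Topo}$ for $n\in\mathbb{N}$, $\vec t\in\mathsf{Topo}^n$. PIFO trees: $\mathsf{Leaf}(p)\in\mathsf{PIFOTree}( * )$ for $p\in\mathsf{PIFO}(\mathsf{Pkt})$; $\mathsf{Internal}(\vec q,p)\in\mathsf{PIFOTree}(\mathsf{Node}(\vec t))$ whenever $\vec t\in\mathsf{Topo}^n$, $p\in\mathsf{PIFO}(\{1,\dots,n\})$, $\vec q[i]\in\mathsf{PIFOTree}(\vec t[i])$. $\vec q[q'/i]$ replaces the $i$-th entry by $q'$. Paths: $\mathsf{Path}( * )=\mathsf{Rk}$; $\mathsf{Path}(\mathsf{Node}(\vec t))$ consists of $(i,r)::pt$ with $1\le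 i\le n$, $r\in\mathsf{Rk}$, $pt\in\mathsf{Path}(\vec t[i])$. push: $\mathsf{push}(\mathsf{Leaf}(p),pkt,r)=\mathsf{Leaf}(\mathsf{push}_{\mathsf{PIFO}}(p,pkt,r))$; $\mathsf{push}(\mathsf{Internal}(\vec q,p),pkt,(i,r)::pt)=\mathsf{Internal}(\vec q[\mathsf{push}(\vec q[i],pkt,pt)/i],\mathsf{push}_{\mathsf{PIFO}}(p,i,r))$. Addresses: $\mathsf{Addr}(t)\subseteq\mathbb{N}^*$ is the smallest set with $\epsilon\in\mathsf{Addr}(t)$ and $i\cdot\alpha\in\mathsf{Addr}(\mathsf{Node}(\vec t))$ for $1\le i\le n$, $\alpha\in\mathsf{Addr}(\vec t[i])$. Subtrees: $t/\epsilon=t$, $\mathsf{Node}(\vec t)/(i\cdot\alpha)=\vec t[i]/\alpha$. An embedding of $t_1$ in $t_2$ is an injective $f:\mathsf{Addr}(t_1)\to\mathsf{Addr}(t_2)$ with $f(\epsilon)=\epsilon$, $t_2/f(\alpha)=*$ whenever $t_1/\alpha=*$, and $\alpha$ a prefix of $\alpha'$ iff $f(\alpha)$ a prefix of $f(\alpha')$. If $t_1=*$ then $t_2=*$; if $t_1=\mathsf{Node}(\vec t_1)$, the map $f_i$ defined by $f(i\cdot\alpha)=f(i)\cdot f_i(\alpha)$ is an embedding of $t_1/i$ in $t_2/f(i)$, and $f(i)\neq\epsilon$. Lifting $\widehat f:\mathsf{PIFOTree}(t_1)\to\mathsf{PIFOTree}(t_2)$, by recursion on $t_1$: if $t_1=*$,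 $\widehat f(q)=q$. If $t_1=\mathsf{Node}(\vec t_1)$ with $n$ children and $q=\mathsf{Internal}(\vec q,p)$, define for each address $\alpha$ of $t_2$ that is a prefix of some $f(i)$ a tree $\widehat f(q)_\alpha\in\mathsf{PIFOTree}(t_2/\alpha)$, from longer to shorter $\alpha$: if $\alpha=f(i)$, $\widehat f(q)_\alpha=\widehat{f_i}(\vec q[i])$; otherwise $t_2/\alpha$ has some $m$ children and $\widehat f(q)_\alpha=\mathsf{Internal}(\vec q_\alpha,p_\alpha)$, where $\vec q_\alpha[j]=\widehat f(q)_{\alpha\cdot j}$ if $\alpha\cdot j$ is a prefix of some $f(i)$ and otherwise $\vec q_\alpha[j]$ is the tree of topology $t_2/(\alpha\cdot j)$ with all PIFOs empty; and $p_\alpha$ is obtained from $p$ by replacing each entry $(i,r)$ by $(j,r)$ where $\alpha\cdot j$ is a prefix of $f(i)$, deleting entries for which no such $j$ exists, keeping the order. Finally $\widehat f(q)=\widehat f(q)_\epsilon$. Path translation $\widetilde f:\mathsf{Path}(t_1)\to\mathsf{Path}(t_2)$, by recursion on $t_1$: if $t_1=*$, $\widetilde f(r)=r$. If $t_1=\mathsf{Node}(\vec t_1)$ and $pt=(i,r)::pt'$ with $f(i)=j_1j_2\cdots j_k$, then $\widetilde f(pt)=(j_1,r)::(j_2,r)::\cdots::(j_k,r)::\widetilde{f_i}(pt')$. *)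

From mathcomp Require Import all_boot all_order.
Set Implicit Arguments. Unset Strict Implicit. Unset Printing Implicit Defensive.

(* Conventions: children / indices are 0-based (paper's index i <-> i-1 here).
   Addresses are seq nat. *)

Inductive topo : Type := Star | Node of seq topo.

(** PIFO trees, untyped; typing w.r.t. a topology is [wf_tree]. A PIFO over S
    is a seq (S * Rk) in insertion order. *)
Inductive ptree (Pkt Rk : Type) : Type :=
| Leaf of seq (Pkt * Rk)
| Internal of seq (ptree Pkt Rk) & seq (nat * Rk).
Arguments Leaf {Pkt Rk}.
Arguments Internal {Pkt Rk}.

Fixpoint wf_tree (Pkt Rk : Type) (t : topo) (q : ptree Pkt Rk) {struct q} : Prop :=
  match t, q with
  | Star, Leaf _ => True
  | Node ts, Internal qs p =>
      [/\ size qs = size ts, all (fun e => e.1 < size ts) p &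
        (fix go (ts : seq topo) (qs : seq (ptree Pkt Rk)) {struct qs} : Prop :=
           match ts, qs with
           | [::], [::] => True
           | t :: ts', q :: qs' => wf_tree t q /\ go ts' qs'
           | _, _ => False
           end) ts qs]
  | _, _ => False
  end.

Inductive rpath (Rk : Type) : Type :=
| PEnd of Rk
| PStep of nat & Rk & rpath Rk.
Arguments PEnd {Rk}.
Arguments PStep {Rk}.

Fixpoint wf_path (Rk : Type) (t : topo) (pt : rpath Rk) {struct pt} : Prop :=
  match t, pt with
  | Star, PEnd _ => True
  | Node ts, PStep i _ pt' => i < size ts /\ wf_path (nth Star ts i) pt'
  | _, _ => False
  end.

(** push_tree (on well-formed arguments; other cases are junk) *)
Fixpoint push_tree (Pkt Rk : Type) (q : ptree Pkt Rk) (pkt : Pkt) (pt : rpath Rk)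
  {struct pt} : ptree Pkt Rk :=
  match pt, q with
  | PEnd r, Leaf p => Leaf (rcons p (pkt, r))
  | PStep i r pt', Internal qs p =>
      Internal (set_nth (Leaf [::]) qs i (push_tree (nth (Leaf [::]) qs i) pkt pt'))
               (rcons p (i, r))
  | _, _ => q
  end.

Fixpoint is_addr (t : topo) (a : seq nat) {struct a} : Prop :=
  match a with
  | [::] => True
  | i :: a' =>
      match t with
      | Star => False
      | Node ts => i < size ts /\ is_addr (nth Star ts i) a'
      end
  end.

Fixpoint subtree (t : topo) (a : seq nat) {struct a} : topo :=
  match a with
  | [::] => t
  | i :: a' => match t with Star => Star | Node ts => subtree (nth Star ts i) a' end
  end.

(** Embeddings of t1 in t2 (f is a total map on seq nat; only its values on
    Addr(t1) matter). *)
Definition embedding (t1 t2 : topo) (f : seq nat -> seq nat) : Prop :=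
  [/\ f [::] = [::],
      forall a, is_addr t1 a -> is_addr t2 (f a),
      forall a a', is_addr t1 a -> is_addr t1 a' -> f a = f a' -> a = a',
      forall a, is_addr t1 a -> subtree t1 a = Star -> subtree t2 (f a) = Star &
      forall a a', is_addr t1 a -> is_addr t1 a' -> prefix a a' = prefix (f a) (f a')].

(** f_i : f (i :: a) = f [:: i] ++ f_i a *)
Definition fsub (f : seq nat -> seq nat) (i : nat) : seq nat -> seq nat :=
  fun a => drop (size (f [:: i])) (f (i :: a)).

Fixpoint empty_tree (Pkt Rk : Type) (s : topo) : ptree Pkt Rk :=
  match s with
  | Star => Leaf [::]
  | Node ss => Internal (map (@empty_tree Pkt Rk) ss) [::]
  end.

(** p_alpha: entries (i, r) with alpha a strict prefix of f(i) become (j, r),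
    where alpha ++ [:: j] is a prefix of f(i); others are deleted. *)
Definition pifo_restrict (Rk : Type) (f : seq nat -> seq nat) (alpha : seq nat)
  (p : seq (nat * Rk)) : seq (nat * Rk) :=
  [seq (nth 0 (f [:: e.1]) (size alpha), e.2)
     | e <- p & prefix alpha (f [:: e.1]) && (size alpha < size (f [:: e.1]))].

(** The trees hat f(q)_alpha, for s = t2/alpha; [n] = number of children of t1,
    [lifted] = the list of the hat{f_i}(q_i). *)
Fixpoint build (Pkt Rk : Type) (n : nat) (f : seq nat -> seq nat)
  (lifted : seq (ptree Pkt Rk)) (p : seq (nat * Rk)) (s : topo) (alpha : seq nat)
  {struct s} : ptree Pkt Rk :=
  let k := find (fun i => f [:: i] == alpha) (iota 0 n) in
  if k < n then nth (Leaf [::]) lifted k else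
  match s with
  | Star => Leaf [::] (* unreachable for embeddings *)
  | Node ss =>
      Internal
        ((fix go (ss : seq topo) (j : nat) {struct ss} : seq (ptree Pkt Rk) :=
            match ss with
            | [::] => [::]
            | s' :: ss' =>
                (if has (fun i => prefix (rcons alpha j) (f [:: i])) (iota 0 n)
                 then build n f lifted p s' (rcons alpha j)
                 else empty_tree Pkt Rk s') :: go ss' j.+1
            end) ss 0)
        (pifo_restrict f alpha p)
  end.

(** Lifting hat f : PIFOTree(t1) -> PIFOTree(t2). Defined by recursion on the
    tree q (equivalently on t1 for well-formed q: Leaf iff t1 is Star). *)
Fixpoint lift_tree (Pkt Rk : Type) (t2 : topo) (f : seq nat -> seq nat)
  (q : ptree Pkt Rk) {struct q} : ptree Pkt Rk :=
  match q with
  | Leaf _ => q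
  | Internal qs p =>
      let lifted :=
        (fix go (qs : seq (ptree Pkt Rk)) (k : nat) {struct qs} : seq (ptree Pkt Rk) :=
           match qs with
           | [::] => [::]
           | q' :: qs' => lift_tree (subtree t2 (f [:: k])) (fsub f k) q' :: go qs' k.+1
           end) qs 0 in
      build (size qs) f lifted p t2 [::]
  end.

Fixpoint tpath (Rk : Type) (f : seq nat -> seq nat) (pt : rpath Rk) {struct pt}
  : rpath Rk :=
  match pt with
  | PEnd r => PEnd r
  | PStep i r pt' => foldr (fun j acc => PStep j r acc) (tpath (fsub f i) pt') (f [:: i])
  end.

From mathcomp Require Import all_boot all_order.
Set Implicit Arguments. Unset Strict Implicit. Unset Printing Implicit Defensive.

(* Pushing [q] along [PStep i r pt] changes only the [i]-th child of [q] and
   appends [(i, r)] to its root PIFO.  In [lift_tree t2 f q] that child is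
   lifted to the subtree at address [f [:: i]], and the root PIFO is spread
   along the path to [f [:: i]]: the node at a strict prefix [alpha] of
   [f [:: i]] records [(j, r)], where [j] is the step of [f [:: i]] after
   [alpha].  Hence nodes off that path are unchanged, the nodes on it receive
   exactly the steps that [tpath f] prepends, and the lifted child is handled
   by induction on [pt] through the sub-embedding [fsub f i]. *)

Section Unfolding.
Variables (Pkt Rk : Type).
Implicit Types (q : ptree Pkt Rk) (qs lifted : seq (ptree Pkt Rk)).
Implicit Types (p : seq (nat * Rk)) (f : seq nat -> seq nat).

Definition child_at n f (alpha : seq nat) := find (fun j => f [:: j] == alpha) (iota 0 n).

Fixpoint build_children n f lifted p alpha (ss : seq topo) (j : nat) :=
  match ss with
  | [::] => [::]
  | s :: ss' =>
     (if has (fun i => prefix (rcons alpha j) (f [:: i])) (iota 0 n)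
      then build n f lifted p s (rcons alpha j)
      else empty_tree Pkt Rk s) :: build_children n f lifted p alpha ss' j.+1
  end.

Lemma buildE n f lifted p s alpha :
  build n f lifted p s alpha =
  if child_at n f alpha < n then nth (Leaf [::]) lifted (child_at n f alpha) else
  match s with
  | Star => Leaf [::]
  | Node ss => Internal (build_children n f lifted p alpha ss 0) (pifo_restrict f alpha p)
  end.
Proof.
case: s => // ss /=; congr (if _ then _ else Internal _ _).
set range := iota 0 n. (* keeps [elim] from generalizing the [0] of [iota 0 n] *)
by elim: ss 0 => //= s ss IH j; congr (_ :: _); exact: IH.
Qed.

Lemma size_build_children n f lifted p alpha ss j :
  size (build_children n f lifted p alpha ss j) = size ss.
Proof. by elim: ss j => //= s ss IH j; rewrite IH. Qed.

Lemma nth_build_children n f lifted p alpha ss j m : m < size ss ->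
  nth (Leaf [::]) (build_children n f lifted p alpha ss j) m =
  if has (fun i => prefix (rcons alpha (j + m)) (f [:: i])) (iota 0 n)
  then build n f lifted p (nth Star ss m) (rcons alpha (j + m))
  else empty_tree Pkt Rk (nth Star ss m).
Proof.
elim: ss j m => //= s ss IH j [|m] lt_m_ss /=; first by rewrite addn0.
by rewrite IH // addSnnS.
Qed.

Fixpoint lift_children (t2 : topo) f qs (k : nat) :=
  match qs with
  | [::] => [::]
  | q :: qs' => lift_tree (subtree t2 (f [:: k])) (fsub f k) q :: lift_children t2 f qs' k.+1
  end.

Lemma lift_tree_InternalE t2 f qs p :
  lift_tree t2 f (Internal qs p) = build (size qs) f (lift_children t2 f qs 0) p t2 [::].
Proof. by rewrite /=; congr build; elim: qs 0 => //= q qs IH j; congr (_ :: _); exact: IH. Qed.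

Lemma nth_lift_children t2 f qs k m : m < size qs ->
  nth (Leaf [::]) (lift_children t2 f qs k) m =
  lift_tree (subtree t2 (f [:: k + m])) (fsub f (k + m)) (nth (Leaf [::]) qs m).
Proof.
elim: qs k m => //= q qs IH k [|m] lt_m_qs /=; first by rewrite addn0.
by rewrite IH // addSnnS.
Qed.

Lemma lift_children_set_nth t2 f qs k m q : m < size qs ->
  lift_children t2 f (set_nth (Leaf [::]) qs m q) k =
  set_nth (Leaf [::]) (lift_children t2 f qs k) m
    (lift_tree (subtree t2 (f [:: k + m])) (fsub f (k + m)) q).
Proof.
elim: qs k m => //= q' qs IH k [|m] lt_m_qs /=; first by rewrite addn0.
by rewrite IH // addSnnS.
Qed.

Lemma wf_tree_nth ts qs p m :
  wf_tree (Node ts) (Internal qs p) -> m < size ts ->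
  wf_tree (nth Star ts m) (nth (Leaf [::]) qs m).
Proof.
case=> _ _; elim: ts qs m => [|t ts IH] [|q qs] //= [|m] [wf_q wf_qs] lt_m_ts //=.
exact: IH.
Qed.

End Unfolding.

Section TopoInd.
Variable P : topo -> Prop.
Hypothesis P_Star : P Star.
Hypothesis P_Node : forall ss, (forall m, m < size ss -> P (nth Star ss m)) -> P (Node ss).

Fixpoint topo_nth_ind (t : topo) : P t :=
  match t with
  | Star => P_Star
  | Node ss => P_Node ((fix children (l : seq topo) : forall m, m < size l -> P (nth Star l m) :=
      match l with
      | [::] => fun m lt_m0 => match notF lt_m0 with end
      | s :: l' => fun m => match m with
                   | 0 => fun _ => topo_nth_ind s
                   | m'.+1 => children l' m'
                   end
      end) ss)
  end.

End TopoInd.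

Lemma subtree_Star a : subtree Star a = Star.
Proof. by case: a. Qed.

Lemma subtree_cat t a b : subtree t (a ++ b) = subtree (subtree t a) b.
Proof. by elim: a t => //= i a IH [|ts]; rewrite ?subtree_Star. Qed.

Lemma is_addr_cat t a b : is_addr t (a ++ b) <-> is_addr t a /\ is_addr (subtree t a) b.
Proof.
elim: a t => /= [|i a IH] [|ts] /=; try tauto.
have := IH (nth Star ts i); tauto.
Qed.

Section Embedding.
Variables (ts : seq topo) (t2 : topo) (f : seq nat -> seq nat).
Hypothesis emb_f : embedding (Node ts) t2 f.

Lemma embedding_cons i a : i < size ts -> is_addr (nth Star ts i) a ->
  f (i :: a) = f [:: i] ++ fsub f i a.
Proof.
move=> lt_i_ts addr_a; case: emb_f => _ _ _ _ pre_f; rewrite /fsub.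
have /prefixP[s ->] : prefix (f [:: i]) (f (i :: a)).
  by rewrite -pre_f //= eqxx prefix0s.
by rewrite drop_size_cat.
Qed.

Lemma embedding_prefix_child i j : i < size ts -> j < size ts ->
  prefix (f [:: j]) (f [:: i]) -> j = i.
Proof.
case: emb_f => _ _ _ _ pre_f lt_i_ts lt_j_ts.
by rewrite -pre_f //= andbT => /eqP.
Qed.

Lemma embedding_fsub i : i < size ts ->
  embedding (nth Star ts i) (subtree t2 (f [:: i])) (fsub f i).
Proof.
move=> lt_i_ts; have fE := embedding_cons lt_i_ts.
case: emb_f => _ addr_f inj_f leaf_f pre_f; split.
- by rewrite /fsub drop_size.
- move=> a addr_a; have := addr_f (i :: a) (conj lt_i_ts addr_a).
  by rewrite (fE a addr_a) => /is_addr_cat[].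
- move=> a a' addr_a addr_a' eq_fa.
  have := inj_f (i :: a) (i :: a') (conj lt_i_ts addr_a) (conj lt_i_ts addr_a').
  by rewrite (fE a addr_a) (fE a' addr_a') eq_fa => /(_ erefl) [].
- move=> a addr_a leaf_a; have := leaf_f (i :: a) (conj lt_i_ts addr_a) leaf_a.
  by rewrite (fE a addr_a) subtree_cat.
- move=> a a' addr_a addr_a'.
  have := pre_f (i :: a) (i :: a') (conj lt_i_ts addr_a) (conj lt_i_ts addr_a').
  by rewrite (fE a addr_a) (fE a' addr_a') prefix_cons eqxx prefix_catr // eqxx.
Qed.

End Embedding.

Section BuildPush.
Variables (Pkt Rk : Type) (n : nat) (f : seq nat -> seq nat) (i : nat) (r : Rk).
Implicit Types (lifted : seq (ptree Pkt Rk)) (p : seq (nat * Rk)).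

Lemma child_atP alpha : child_at n f alpha < n -> f [:: child_at n f alpha] = alpha.
Proof.
move=> lt_k_n; have : has (fun j => f [:: j] == alpha) (iota 0 n).
  by rewrite has_find size_iota.
by move/(nth_find 0); rewrite nth_iota // add0n => /eqP.
Qed.

Lemma build_push_off_path lifted p q s alpha : ~~ prefix alpha (f [:: i]) ->
  build n f (set_nth (Leaf [::]) lifted i q) (rcons p (i, r)) s alpha =
  build n f lifted p s alpha.
Proof.
have nth_lifted_off beta : ~~ prefix beta (f [:: i]) -> child_at n f beta < n ->
    nth (Leaf [::]) (set_nth (Leaf [::]) lifted i q) (child_at n f beta) =
    nth (Leaf [::]) lifted (child_at n f beta).
  move=> off_beta /child_atP fk; rewrite nth_set_nth /=; case: eqP => // k_i.
  by rewrite -fk k_i prefix_refl in off_beta.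
elim/topo_nth_ind: s alpha => [|ss IH] alpha off_alpha; rewrite !buildE.
  by case: ifP => // /(nth_lifted_off _ off_alpha).
case: ifP => [/(nth_lifted_off _ off_alpha) //|_]; congr Internal.
  apply: (@eq_from_nth _ (Leaf [::])); first by rewrite !size_build_children.
  move=> m; rewrite size_build_children => lt_m_ss; rewrite !nth_build_children //.
  case: ifP => // _; apply: IH => //; apply: contra off_alpha.
  exact/prefix_trans/prefix_rcons.
by rewrite /pifo_restrict filter_rcons /= (negbTE off_alpha).
Qed.

Hypothesis lt_i_n : i < n.
Hypothesis prefix_child_inj : forall j, j < n -> prefix (f [:: j]) (f [:: i]) -> j = i.

Lemma child_at_self : child_at n f (f [:: i]) = i.
Proof.
case: (ltngtP (child_at n f (f [:: i])) i) => // [lt_k_i|lt_i_k].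
  have lt_k_n := ltn_trans lt_k_i lt_i_n.
  have := prefix_child_inj lt_k_n; rewrite child_atP // prefix_refl => /(_ isT) k_i.
  by rewrite k_i ltnn in lt_k_i.
by have := before_find 0 lt_i_k; rewrite nth_iota // add0n eqxx.
Qed.

Lemma child_at_strict_prefix alpha j suffix : f [:: i] = alpha ++ j :: suffix ->
  (child_at n f alpha < n) = false.
Proof.
move=> fi; apply/negbTE/negP => /[dup] lt_k_n /child_atP fk.
have := prefix_child_inj lt_k_n; rewrite fk fi prefix_prefix => /(_ isT) k_i.
move: fk; rewrite k_i fi => /(congr1 size); rewrite size_cat /= => /eqP.
by rewrite -{2}(addn0 (size alpha)) eqn_add2l.
Qed.

Lemma build_push_on_path lifted p (pkt : Pkt) pt suffix s alpha :
  f [:: i] = alpha ++ suffix -> is_addr s suffix ->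
  build n f (set_nth (Leaf [::]) lifted i (push_tree (nth (Leaf [::]) lifted i) pkt pt))
    (rcons p (i, r)) s alpha
  = push_tree (build n f lifted p s alpha) pkt (foldr (fun j acc => PStep j r acc) pt suffix).
Proof.
elim: suffix s alpha => [|j suffix IH] s alpha fi addr_suffix.
  rewrite cats0 in fi; rewrite !buildE -fi child_at_self lt_i_n.
  by rewrite nth_set_nth /= eqxx.
case: s addr_suffix => [[]|ss [lt_j_ss addr_suffix]].
rewrite !buildE (child_at_strict_prefix fi) /=; congr Internal.
  apply: (@eq_from_nth _ (Leaf [::])).
    by rewrite size_set_nth !size_build_children; apply/esym/maxn_idPr.
  move=> m; rewrite size_build_children => lt_m_ss.
  rewrite nth_set_nth /= !nth_build_children // add0n.
  have fi' : f [:: i] = rcons alpha j ++ suffix by rewrite fi cat_rcons.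
  case: eqP => [->|m_neq_j].
    have -> : has (fun k => prefix (rcons alpha j) (f [:: k])) (iota 0 n).
      by apply/hasP; exists i; rewrite ?mem_iota // fi' prefix_prefix.
    exact: IH.
  case: ifP => // _; apply: build_push_off_path.
  by rewrite fi -cats1 prefix_catr // eqxx /=; case: eqP.
rewrite /pifo_restrict filter_rcons fi prefix_prefix size_cat /= -addSnnS leq_addr /=.
by rewrite map_rcons /= fi nth_cat ltnn subnn.
Qed.

End BuildPush.

Unset Implicit Arguments. Set Strict Implicit. Set Printing Implicit Defensive.

Theorem lemma5p10 (Pkt : Type) (d : Order.disp_t) (Rk : orderType d)
  (t1 t2 : topo) (f : seq nat -> seq nat) (pkt : Pkt) (pt : rpath Rk)
  (q : ptree Pkt Rk) :
  embedding t1 t2 f -> wf_path t1 pt -> wf_tree t1 q ->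
  lift_tree t2 f (push_tree q pkt pt) = push_tree (lift_tree t2 f q) pkt (tpath f pt).
Proof.
elim: pt t1 t2 f q => [r0|i r pt IH] t1 t2 f q emb_f wf_pt wf_q.
  by case: t1 emb_f wf_pt wf_q => // _ _; case: q.
case: t1 wf_pt wf_q emb_f => [[]|ts [lt_i_ts wf_pt] wf_q emb_f].
case: q wf_q => [? []|qs p wf_q].
have size_qs : size qs = size ts by case: wf_q.
have lt_i_qs : i < size qs by rewrite size_qs.
have push_child := IH _ _ _ (nth (Leaf [::]) qs i)
  (embedding_fsub emb_f lt_i_ts) wf_pt (wf_tree_nth wf_q lt_i_ts).
rewrite [push_tree _ _ _]/= [tpath _ _]/= !lift_tree_InternalE size_set_nth (maxn_idPr lt_i_qs).
rewrite lift_children_set_nth // push_child -(nth_lift_children t2 f 0 lt_i_qs).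
apply: build_push_on_path => //.
- by move=> j; rewrite size_qs => /(embedding_prefix_child emb_f lt_i_ts).
- by case: emb_f => _ addr_f _ _ _; apply: (addr_f [:: i]).
Qed.
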